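(* Let $r\in\{0,\ldots,N\}$ and suppose $\xi_r(\varpi^N)<1/2$. Then for all $A,A'\in\mathbb{R}^{n\times s}$, $$\|\phi(A')-\phi(A)\|_1\le \frac{1}{1-2\xi_r(\varpi^N)}\big(\delta_r(A')+\delta_r(A)\big).$$
   Context: Data: integers $n,s,N\ge1$ and a dataset $\varpi^N=((x_1,y_1),\ldots,(x_N,y_N))$ with $x_t\in\mathbb{R}^n$, $y_t\in\mathbb{R}$. Let $\mathbb{T}=\{1,\ldots,N\}$, $\mathbb{S}=\{1,\ldots,s\}$. For $A=[a_1\ \cdots\ a_s]\in\mathbb{R}^{n\times s}$, $\sigma_A:\mathbb{T}\to\mathbb{S}$ is a switching signal satisfying $\sigma_A(t)\in\arg\min_{i\in\mathbb{S}}|y_t-x_t^\top a_i|$ for all $t$, selected uniquely by a fixed rule depending only on $A$ and the data (among all admissible choices, one maximizing $\min_{i}|I_i(A)|$, ties then broken by assigning the smallest admissible index). $I_i(A)=\{t\in\mathbb{T}:\sigma_A(t)=i\}$. Define $\phi(A)=\big(y_1-x_1^\top a_{\sigma_A(1)},\ldots,y_N-x_N^\top a_{\sigma_A(N)}\big)^\top\in\mathbb{R}^N$ and $\mathcal{J}(A)=\|\phi(A)\|_1$. For $\mathcal{T}\subset\mathbb{T}$, $\phi_{\mathcal{T}}(A)$ is the subvector of $\phi(A)$ indexed by $\mathcal{T}$. $\mathcal{S}_r=\{w\in\mathbb{R}^N:\|w\|_0\le r\}$, and $\delta_r(A)=\inf_{w\in\mathcal{S}_r}\|\phi(A)-w\|_1$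 (sum of the $N-r$ smallest absolute entries of $\phi(A)$). The $r$-th concentration ratio is $$\xi_r(\varpi^N)=\sup\Big\{\frac{\|\phi_{\mathcal{T}}(A)-\phi_{\mathcal{T}}(A')\|_1}{\|\phi(A)-\phi(A')\|_1}: A,A'\in\mathbb{R}^{n\times s},\ \mathcal{T}\subset\mathbb{T},\ \phi(A)\ne\phi(A'),\ |\mathcal{T}|\le r\Big\}.$$ *)

From HB Require Import structures.
From mathcomp Require Import all_boot all_order all_algebra.
From mathcomp Require Import classical_sets reals.
Set Implicit Arguments. Unset Strict Implicit. Unset Printing Implicit Defensive.
Import Order.TTheory GRing.Theory Num.Theory.
Local Open Scope ring_scope.
Local Open Scope classical_set_scope.

Section Switched.
Variables (R : realType) (n s N : nat).
Variables (x : 'I_N -> 'rV[R]_n) (y : 'I_N -> R).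

Definition resid (A : 'M[R]_(n, s)) (t : 'I_N) (i : 'I_s) : R :=
  y t - (x t *m col i A) 0 0.

Definition admissible (A : 'M[R]_(n, s)) (sg : {ffun 'I_N -> 'I_s}) : bool :=
  [forall t, [forall i, `|resid A t (sg t)| <= `|resid A t i|]].

Definition minsize (sg : {ffun 'I_N -> 'I_s}) : nat :=
  \big[minn/N]_(i < s) #|[set t | sg t == i]|.

(* lexicographic code of (sigma(1),...,sigma(N)), first coordinate most
   significant: smaller code = lexicographically smaller *)
Definition lexcode (sg : {ffun 'I_N -> 'I_s}) : nat :=
  \sum_(t < N) sg t * s ^ (N - t.+1).

Definition selected (A : 'M[R]_(n, s)) (sg : {ffun 'I_N -> 'I_s}) : bool :=
  [&& admissible A sg,
      [forall g, admissible A g ==> (minsize g <= minsize sg)%N] &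
      [forall g, (admissible A g && (minsize g == minsize sg)) ==>
                 (lexcode sg <= lexcode g)%N]].

(* phi(A) in R^N (row vector); the pick always succeeds when s >= 1 *)
Definition phi (A : 'M[R]_(n, s)) : 'rV[R]_N :=
  \row_t (if [pick sg | selected A sg] is Some sg then resid A t (sg t) else 0).

Definition l1 (v : 'rV[R]_N) : R := \sum_(t < N) `|v 0 t|.
Definition l1_on (T : {set 'I_N}) (v : 'rV[R]_N) : R := \sum_(t in T) `|v 0 t|.
Definition l0 (w : 'rV[R]_N) : nat := #|[set t | w 0 t != 0]|.

Definition J (A : 'M[R]_(n, s)) : R := l1 (phi A).

Definition delta (r : nat) (A : 'M[R]_(n, s)) : R :=
  inf [set l1 (phi A - w) | w in [set w : 'rV[R]_N | (l0 w <= r)%N]].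

Definition xi (r : nat) : R :=
  sup [set q | exists (A A' : 'M[R]_(n, s)) (T : {set 'I_N}),
        [/\ phi A <> phi A', (#|T| <= r)%N &
            q = l1_on T (phi A - phi A') / l1 (phi A - phi A')]].

End Switched.

From HB Require Import structures.
From mathcomp Require Import all_boot all_order all_algebra.
From mathcomp Require Import boolp classical_sets reals lra.
Set Implicit Arguments. Unset Strict Implicit. Unset Printing Implicit Defensive.
Import Order.TTheory GRing.Theory Num.Theory.
Local Open Scope ring_scope.

(* Write v = phi(A') - phi(A) and let w, w' be r-sparse vectors with supports
   T, T'.  Off T and T' the vectors w, w' vanish, so the triangle inequality
   bounds |v_t| there by |phi(A')_t - w_t| + |phi(A)_t - w'_t|; on T and on
   T' \ T (both of size <= r) the mass of v is at most xi_r * ||v||_1 by the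
   definition of the concentration ratio as a supremum.  Hence
       (1 - 2 xi_r) ||v||_1 <= ||phi(A') - w||_1 + ||phi(A) - w'||_1,
   and taking the infimum over w and then over w' gives the theorem. *)

Section Vectors.
Variables (R : realType) (N : nat).
Implicit Types (u v w z : 'rV[R]_N) (T : {set 'I_N}).

Definition support w : {set 'I_N} := [set t | w 0 t != 0].

Lemma l0_support w : l0 w = #|support w|.
Proof.
rewrite /l0; apply: eq_card => t; rewrite [RHS]inE.
by rewrite /in_mem /= /in_set /= asboolb.
Qed.

Lemma notin_support w t : t \notin support w -> w 0 t = 0.
Proof. by rewrite inE negbK => /eqP. Qed.

Lemma l1_ge0 v : 0 <= l1 v.
Proof. by apply: sumr_ge0 => t _. Qed.

Lemma l1_on_le_l1 T v : l1_on T v <= l1 v.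
Proof.
by rewrite /l1_on big_mkcond /=; apply: ler_sum => t _; case: ifP.
Qed.

Lemma l1_eq0 v : l1 v = 0 -> v = 0.
Proof.
move=> v0; apply/rowP => t; rewrite mxE; apply/eqP; rewrite -normr_eq0.
rewrite eq_le normr_ge0 andbT -v0 /l1 (bigD1 t) //= lerDl.
by apply: sumr_ge0.
Qed.

Lemma l1_split_supports u z w w' :
  l1 (u - z) <= l1_on (support w) (u - z) + l1_on (support w' :\: support w) (u - z)
                + (l1 (u - w) + l1 (z - w')).
Proof.
rewrite /l1_on big_mkcond [X in _ + X + _]big_mkcond /l1 -!big_split /=.
apply: ler_sum => t _.
have [tT|tT] := boolP (t \in support w).
  by rewrite -addrA lerDl !addr_ge0 //; case: ifP.
have [tT'|tT'] := boolP (t \in support w' :\: support w).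
  by rewrite add0r lerDl addr_ge0.
have w't0 : w' 0 t = 0.
  by apply: notin_support; apply: contraNN tT' => h; rewrite inE tT h.
have wt0 : w 0 t = 0 by exact: notin_support.
rewrite !add0r !mxE wt0 w't0 !subr0.
exact: ler_normB.
Qed.

End Vectors.

Section Residuals.
Variables (R : realType) (n s N : nat).
Variables (x : 'I_N -> 'rV[R]_n) (y : 'I_N -> R).

Local Notation phi := (phi x y).
Local Notation delta := (delta x y).
Local Notation xi := (xi s x y).

(* Every ratio entering the supremum defining xi_r is at most xi_r, since
   these ratios are bounded by 1. *)
Lemma ratio_le_xi (r : nat) (A A' : 'M[R]_(n, s)) (T : {set 'I_N}) :
  phi A <> phi A' -> (#|T| <= r)%N ->
  l1_on T (phi A - phi A') / l1 (phi A - phi A') <= xi r.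
Proof.
move=> ne hT; apply: sup_upper_bound; last by exists A, A', T.
split; first by exists (l1_on T (phi A - phi A') / l1 (phi A - phi A')), A, A', T.
exists 1 => q [B [B' [U [_ _ ->]]]].
have [->|p0] := eqVneq (l1 (phi B - phi B')) 0; first by rewrite invr0 mulr0.
have p : 0 < l1 (phi B - phi B') by rewrite lt_neqAle eq_sym p0 l1_ge0.
by rewrite ler_pdivrMr // mul1r l1_on_le_l1.
Qed.

Lemma concentration_bound (r : nat) (A A' : 'M[R]_(n, s)) (T : {set 'I_N}) :
  (#|T| <= r)%N ->
  l1_on T (phi A' - phi A) <= xi r * l1 (phi A' - phi A).
Proof.
move=> hT; have [e|ne] := eqVneq (phi A') (phi A).
  rewrite e subrr /l1_on /l1.
  under eq_bigr do rewrite mxE normr0.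
  under [X in _ <= _ * X]eq_bigr do rewrite mxE normr0.
  by rewrite !big1 ?mulr0.
have vpos : 0 < l1 (phi A' - phi A).
  rewrite lt_neqAle l1_ge0 andbT eq_sym; apply/eqP => /l1_eq0/eqP.
  by rewrite subr_eq0 (negPf ne).
by rewrite -ler_pdivrMr //; apply: ratio_le_xi => //; apply/eqP.
Qed.

(* delta_r(A) is an infimum over a nonempty set (w = 0 is r-sparse), so any
   common lower bound of the approximation errors bounds delta_r(A). *)
Lemma le_delta (r : nat) (A : 'M[R]_(n, s)) (c : R) :
  (forall w, (l0 w <= r)%N -> c <= l1 (phi A - w)) -> c <= delta r A.
Proof.
move=> hc; apply: lb_le_inf; last by move=> q [w hw <-]; exact: hc.
exists (l1 (phi A - 0)), 0 => //=.
rewrite l0_support; apply: leq_trans (leq0n r); rewrite leqn0 cards_eq0.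
by apply/eqP/setP => t; rewrite !inE mxE eqxx.
Qed.

Lemma residual_gap_le (r : nat) (A A' : 'M[R]_(n, s)) (w w' : 'rV[R]_N) :
  (l0 w <= r)%N -> (l0 w' <= r)%N ->
  (1 - 2 * xi r) * l1 (phi A' - phi A) <= l1 (phi A' - w) + l1 (phi A - w').
Proof.
rewrite !l0_support => hw hw'.
have onT := concentration_bound A A' hw.
have onT' : l1_on (support w' :\: support w) (phi A' - phi A)
            <= xi r * l1 (phi A' - phi A).
  apply: concentration_bound; apply: leq_trans hw'.
  exact/subset_leq_card/subsetDl.
have := l1_split_supports (phi A') (phi A) w w'; lra.
Qed.

End Residuals.

Theorem mainTheorem3 (R : realType) (n s N : nat)
  (hn : (0 < n)%N) (hs : (0 < s)%N) (hN : (0 < N)%N)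
  (x : 'I_N -> 'rV[R]_n) (y : 'I_N -> R) (r : nat) (hr : (r <= N)%N)
  (hxi : xi s x y r < 1 / 2) (A A' : 'M[R]_(n, s)) :
  l1 (phi x y A' - phi x y A) <=
    (1 - 2 * xi s x y r)^-1 * (delta x y r A' + delta x y r A).
Proof.
set gap := (1 - 2 * xi s x y r) * l1 (phi x y A' - phi x y A).
have gap_pos : 0 < 1 - 2 * xi s x y r.
  by rewrite subr_gt0 -ltr_pdivlMl // mulrC.
have gap_le : gap - delta x y r A' <= delta x y r A.
  apply: le_delta => w' hw'.
  suff : gap - l1 (phi x y A - w') <= delta x y r A' by lra.
  apply: le_delta => w hw.
  have := residual_gap_le x y A A' hw hw'; rewrite -/gap; lra.
by rewrite ler_pdivlMl //; rewrite /gap in gap_le; lra.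
Qed.
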